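(* Let $n\ge1$ and let $R=\mathbb{C}[x_{ij}: i\ne j,\ i,j\in[1,n+1]]$. Let $X$ be the $(n+1)\times(n+1)$ matrix with off-diagonal entries $x_{ij}$ and zero diagonal. Then the set of $2\times2$ minors of $X$ is a Gröbner basis of the ideal it generates with respect to the degree reverse lexicographic order induced by any total order of the variables.
   Context: Degree revlex order (for variables ordered $x_1>\dots>x_N$): $x^a>x^b$ if $\sum a_i>\sum b_i$, or the degrees are equal and the rightmost nonzero entry of $a-b$ is negative. *)

From HB Require Import structures.
From mathcomp Require Import all_boot all_order all_algebra all_field.
From mathcomp Require Import mpoly.
Set Implicit Arguments. Unset Strict Implicit. Unset Printing Implicit Defensive.
Import Order.TTheory GRing.Theory Num.Theory.
Local Open Scope ring_scope.

(* Polynomial ring C[x_0,...,x_{N-1}] with variable order x_0 > x_1 > ... > x_{N-1}. *)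

Definition drl_gt (N : nat) (a b : 'X_{1..N}) : Prop :=
  (mdeg b < mdeg a)%N \/
  (mdeg a = mdeg b /\
   exists i : 'I_N, (a i < b i)%N /\ forall j : 'I_N, (i < j)%N -> a j = b j).

Definition is_lead_mon (R : ringType) (N : nat) (p : {mpoly R[N]}) (m : 'X_{1..N}) : Prop :=
  m \in msupp p /\ forall m' : 'X_{1..N}, m' \in msupp p -> m' != m -> drl_gt m m'.

Definition mon_dvd (N : nat) (a b : 'X_{1..N}) : Prop := forall i : 'I_N, (a i <= b i)%N.

Definition in_ideal (R : comRingType) (N : nat) (S : {mpoly R[N]} -> Prop)
  (f : {mpoly R[N]}) : Prop :=
  exists s : seq ({mpoly R[N]} * {mpoly R[N]}),
    (forall x, x \in s -> S x.2) /\ f = \sum_(x <- s) x.1 * x.2.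

Definition groebner_drl (R : comRingType) (N : nat) (G : {mpoly R[N]} -> Prop) : Prop :=
  forall f : {mpoly R[N]}, in_ideal G f -> f != 0 ->
    exists g : {mpoly R[N]}, [/\ G g, g != 0 &
      exists mf mg, [/\ is_lead_mon f mf, is_lead_mon g mg & mon_dvd mg mf]].

Definition Xmat (n N : nat) (sigma : 'I_n.+1 -> 'I_n.+1 -> 'I_N) :
  'M[{mpoly algC[N]}]_n.+1 :=
  \matrix_(i, j) (if i == j then 0 else 'X_(sigma i j)).

Definition minors2 (R : comRingType) (m : nat) (A : 'M[R]_m) : R -> Prop :=
  fun p => exists i1 i2 j1 j2 : 'I_m, [/\ (i1 < i2)%N, (j1 < j2)%N &
    p = A i1 j1 * A i2 j2 - A i1 j2 * A i2 j1].

From HB Require Import structures.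
From mathcomp Require Import all_boot all_order all_algebra all_field.
From mathcomp Require Import mpoly.
Set Implicit Arguments. Unset Strict Implicit. Unset Printing Implicit Defensive.
Import GRing.Theory.
Local Open Scope ring_scope.

(* Read a monomial m as a directed multigraph on the vertices 0..n, with
   m (sigma i j) edges i -> j.  Let mf be the leading monomial of a nonzero f in
   the ideal of 2x2 minors.  If mf contains a path b -> a -> c, it is divisible
   by the monomial minor x_ac x_ba (rows a, b and columns a, c).  Otherwise
   consider the sum of the coefficients of f over the monomials having the same
   in- and out-degrees as mf: it vanishes on h * minor for every h, because the
   two terms of a minor differ by swapping the heads of two edges, and a
   monomial containing a path is never in the class of mf.  Hence f has a second
   monomial m < mf in that class.  At the last variable x_il where m and mf
   differ, m exceeds mf, so row i and column l of mf are balanced by edges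
   i -> j and k -> l whose variables come earlier than x_il; then x_ij x_kl is
   the leading monomial of the minor on rows i, k and columns j, l. *)

Section Degrevlex.
Variable N : nat.
Implicit Types (a b c : 'X_{1..N}).

Lemma drl_gt_neq a b : drl_gt a b -> a != b.
Proof. by case=> [|[_ [i [+ _]]]]; apply: contraTneq => ->; rewrite ltnn. Qed.

Lemma drl_gt_trans b a c : drl_gt a b -> drl_gt b c -> drl_gt a c.
Proof.
case=> [ab|[dab [i [abi abup]]]]; case=> [bc|[dbc [j [bcj bcup]]]].
- by left; apply: ltn_trans ab.
- by left; rewrite -dbc.
- by left; rewrite dab.
right; split; first by rewrite dab.
have [ij|ji|/val_inj eij] := ltngtP i j.
- exists j; split=> [|k jk]; first by rewrite abup.
  by rewrite abup ?bcup //; apply: ltn_trans jk.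
- exists i; split=> [|k ik]; first by rewrite -bcup.
  by rewrite abup ?bcup //; apply: ltn_trans ik.
- subst j; exists i; split=> [|k ik]; first exact: ltn_trans bcj.
  by rewrite abup ?bcup.
Qed.

Lemma drl_gt_total a b : a != b -> drl_gt a b \/ drl_gt b a.
Proof.
move=> nab; have [ab|ba|dab] := ltngtP (mdeg a) (mdeg b); [by right; left|by left; left|].
have [i0 hi0] : exists i, a i != b i.
  by apply/existsP; apply: contraR nab => /existsPn eqab; apply/eqP/mnmP => i; apply/eqP/negPn.
have [i abi imax] := @arg_maxnP _ i0 (fun i => a i != b i) val hi0.
have abup (j : 'I_N) : (i < j)%N -> a j = b j.
  by move=> ij; apply/eqP; apply: contraTT ij => /imax; rewrite -leqNgt.
have [lt|gt|eq] := ltngtP (a i) (b i); last by rewrite eq eqxx in abi.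
- by left; right; split=> //; exists i.
- by right; right; split=> //; exists i; split=> // j /abup.
Qed.

Lemma drl_gt_max (s : seq 'X_{1..N}) : s != [::] ->
  exists2 m, m \in s & forall m', m' \in s -> m' != m -> drl_gt m m'.
Proof.
elim: s => [//|x [|y t] IH] _.
  by exists x => [|m']; rewrite ?mem_seq1 // => /eqP->; rewrite eqxx.
have [m mt mmax] := IH isT.
have [->|nxm] := eqVneq x m.
  by exists m => [|m']; rewrite ?inE ?eqxx // => /orP[/eqP->|/mmax]; rewrite ?eqxx.
have [xm|mx] := drl_gt_total nxm.
- exists x => [|m']; first by rewrite inE eqxx.
  rewrite inE => /orP[/eqP->|m't _]; first by rewrite eqxx.
  have [->//|nm'm] := eqVneq m' m.
  exact: drl_gt_trans xm (mmax _ m't nm'm).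
- by exists m => [|m']; rewrite inE ?mt ?orbT // => /orP[/eqP->|/mmax].
Qed.

Lemma drl_gt_mnm2 (u v w z : 'I_N) : (u < w)%N -> (v < w)%N ->
  drl_gt (U_(u) + U_(v))%MM (U_(w) + U_(z))%MM.
Proof.
move=> uw vw; right; split; first by rewrite !mdegD !mdeg1.
have neq_lt (x y : 'I_N) : (x < y)%N -> (x == y) = false.
  by move=> xy; apply/negbTE; apply: contraTneq xy => ->; rewrite ltnn.
have [p [wp zp pwz]] : exists p : 'I_N, [/\ (w <= p)%N, (z <= p)%N & (p == w) || (p == z)].
  by case: (leqP w z) => wz; [exists z | exists w]; rewrite ?eqxx ?orbT ?leqnn // ltnW.
have up := leq_trans uw wp; have vp := leq_trans vw wp.
exists p; split=> [|q pq]; rewrite !mnmDE !mnm1E.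
  by rewrite (neq_lt _ _ up) (neq_lt _ _ vp); case/orP: pwz => /eqP->; rewrite eqxx ?addn1.
by rewrite !neq_lt // ?(ltn_trans up, ltn_trans vp, leq_ltn_trans wp, leq_ltn_trans zp).
Qed.

Lemma mon_dvd_mnm2 (u v : 'I_N) (m : 'X_{1..N}) :
  u != v -> (0 < m u)%N -> (0 < m v)%N -> mon_dvd (U_(u) + U_(v))%MM m.
Proof.
move=> nuv mu mv q; rewrite mnmDE !mnm1E.
have [<-|_] := eqVneq u q; first by rewrite eq_sym (negbTE nuv).
by case: eqP => [<-|].
Qed.

End Degrevlex.

Section LeadingMonomial.
Variables (R : nzRingType) (N : nat).
Implicit Types (p : {mpoly R[N]}) (m : 'X_{1..N}).

Lemma exists_lead_mon p : p != 0 -> exists m, is_lead_mon p m.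
Proof. by rewrite -msupp_eq0 => /drl_gt_max[m]; exists m. Qed.

Lemma is_lead_mon_neq0 p m : is_lead_mon p m -> p != 0.
Proof. by case=> + _; apply: contraTneq => ->; rewrite msupp0. Qed.

Lemma is_lead_monN p m : is_lead_mon p m -> is_lead_mon (- p) m.
Proof. by case=> pm pmax; split=> [|m']; rewrite (perm_mem (msuppN p)) //; apply: pmax. Qed.

Lemma is_lead_monX m : is_lead_mon ('X_[m] : {mpoly R[N]}) m.
Proof. by split=> [|m']; rewrite msuppX mem_seq1 // => /eqP->; rewrite eqxx. Qed.

Lemma is_lead_mon_binomial m m' :
  drl_gt m m' -> is_lead_mon ('X_[m] - 'X_[m'] : {mpoly R[N]}) m.
Proof.
move=> mm'; have nmm' := drl_gt_neq mm'.
split=> [|m'']; rewrite mcoeff_msupp mcoeffB !mcoeffX.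
  by rewrite eqxx (eq_sym m') (negbTE nmm') subr0 oner_eq0.
have [<- //|_] := eqVneq m' m''.
by rewrite subr0 => + nm; rewrite (eq_sym m) (negbTE nm) eqxx.
Qed.

End LeadingMonomial.

Section CoefficientSum.
Variables (R : nzRingType) (N : nat) (P : pred 'X_{1..N}).

Definition mcoeff_sum (p : {mpoly R[N]}) : R := \sum_(m <- msupp p | P m) p@_m.

Lemma mcoeff_sumE p (s : seq 'X_{1..N}) : uniq s -> {subset msupp p <= s} ->
  mcoeff_sum p = \sum_(m <- s | P m) p@_m.
Proof.
move=> us sub; rewrite /mcoeff_sum [RHS](bigID (mem (msupp p))) /=.
rewrite [X in _ = _ + X]big1 ?addr0 => [|m /andP[_ /memN_msupp_eq0]//].
rewrite -big_filter -[RHS]big_filter; apply/perm_big/uniq_perm; rewrite ?filter_uniq //.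
by move=> m; rewrite !mem_filter -andbA; case: (boolP (m \in msupp p)) => // /sub->.
Qed.

Lemma mcoeff_sumB : zmod_morphism mcoeff_sum.
Proof.
move=> p q; pose s := undup (msupp p ++ msupp q); have us : uniq s := undup_uniq _.
have sub_s (r : {mpoly R[N]}) :
    {subset msupp r <= msupp p ++ msupp q} -> {subset msupp r <= s}.
  by move=> sub m /sub; rewrite mem_undup.
have sp : {subset msupp p <= s} by apply: sub_s => m mp; rewrite mem_cat mp.
have sq : {subset msupp q <= s} by apply: sub_s => m mq; rewrite mem_cat mq orbT.
have spq : {subset msupp (p - q) <= s} by apply: sub_s; apply: msuppB_le.
rewrite (mcoeff_sumE us spq) (mcoeff_sumE us sp) (mcoeff_sumE us sq).
by rewrite -sumrB; apply: eq_bigr => m _; rewrite mcoeffB.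
Qed.

HB.instance Definition _ := GRing.isZmodMorphism.Build {mpoly R[N]} R mcoeff_sum mcoeff_sumB.

Lemma mcoeff_sumMX h (w : 'X_{1..N}) :
  mcoeff_sum (h * 'X_[w]) = \sum_(m <- msupp h | P (w + m)%MM) h@_m.
Proof.
rewrite /mcoeff_sum (perm_big _ (msuppMX h w)) big_map.
by apply: eq_bigr => m _; rewrite mcoeffMX.
Qed.

Lemma mcoeff_sum_single p m0 : m0 \in msupp p -> P m0 ->
  {in msupp p, forall m, P m -> m = m0} -> mcoeff_sum p = p@_m0.
Proof.
move=> pm0 Pm0 only_m0; rewrite /mcoeff_sum big_mkcond (bigD1_seq m0) ?msupp_uniq //=.
rewrite Pm0 big1_seq ?addr0 // => m /andP[nm pm].
by case: ifP => // /(only_m0 m pm) em; rewrite em eqxx in nm.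
Qed.

End CoefficientSum.

Lemma sum_nat_gt0P (I : finType) (P : pred I) (F : I -> nat) :
  (0 < \sum_(i | P i) F i)%N -> exists2 i, P i & (0 < F i)%N.
Proof.
by rewrite lt0n sum_nat_eq0 => /forallPn[i]; rewrite negb_imply -lt0n => /andP[]; exists i.
Qed.

Lemma sum_nat_eq_compensate (I : finType) (P : pred I) (F G : I -> nat) l :
  \sum_(i | P i) F i = \sum_(i | P i) G i -> P l -> (F l < G l)%N ->
  exists2 j, P j && (j != l) & (G j < F j)%N.
Proof.
move=> eqFG Pl FGl; apply/exists_inP; apply: contraPT eqFG => /exists_inPn FleG.
apply/eqP/negbT/ltn_eqF; rewrite (bigD1 l) //= [X in (_ < X)%N](bigD1 l) //=.
by rewrite -addSn leq_add // leq_sum // => i /FleG; rewrite -leqNgt.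
Qed.

Section MonomialGraph.
Variables (n N : nat) (sigma : 'I_n.+1 -> 'I_n.+1 -> 'I_N).
Hypothesis sigma_inj :
  forall i j k l, i != j -> k != l -> sigma i j = sigma k l -> i = k /\ j = l.
Implicit Types (m mf : 'X_{1..N}) (a b c i j k l : 'I_n.+1).

Definition outdeg a m := (\sum_(b | b != a) m (sigma a b))%N.
Definition indeg a m := (\sum_(b | b != a) m (sigma b a))%N.
Definition edge_var (p : 'I_N) := [exists i, exists j, (i != j) && (sigma i j == p)].

Definition same_degrees mf m :=
  [&& mdeg m == mdeg mf, [forall a, outdeg a m == outdeg a mf],
      [forall a, indeg a m == indeg a mf] &
      [forall p, ~~ edge_var p ==> (m p == mf p)]].

Definition has_2path mf := [exists a, exists b, exists c,
  [&& b != a, a != c, 0 < mf (sigma b a) & 0 < mf (sigma a c)]%N].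

(* Enough for x_ij x_kl to lead the minor on rows i, k and columns j, l: the
   last of its four variables is then x_il or x_kj. *)
Definition crossing mf i j k l :=
  [&& i != j, k != l, i != l, k != j, i != k, j != l, 0 < mf (sigma i j),
      0 < mf (sigma k l), sigma i j < sigma i l & sigma k l < sigma i l]%N.

Definition has_crossing mf := [exists i, exists j, exists k, exists l, crossing mf i j k l].

Lemma has_2pathI mf a b c : b != a -> a != c ->
  (0 < mf (sigma b a))%N -> (0 < mf (sigma a c))%N -> has_2path mf.
Proof.
by move=> *; apply/existsP; exists a; apply/existsP; exists b; apply/existsP; exists c; apply/and4P.
Qed.

Lemma outdegD a : {morph outdeg a : m1 m2 / (m1 + m2)%MM >-> (m1 + m2)%N}.
Proof. by move=> m1 m2; rewrite -big_split; apply: eq_bigr => b _; rewrite mnmDE. Qed.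

Lemma indegD a : {morph indeg a : m1 m2 / (m1 + m2)%MM >-> (m1 + m2)%N}.
Proof. by move=> m1 m2; rewrite -big_split; apply: eq_bigr => b _; rewrite mnmDE. Qed.

Lemma outdeg_edge a i j : i != j -> outdeg a U_(sigma i j) = (a == i).
Proof.
move=> nij; rewrite /outdeg (eq_bigr (fun b => nat_of_bool ((a == i) && (b == j)))); last first.
  move=> b nba; rewrite mnm1E; congr nat_of_bool; apply/eqP/andP.
    by rewrite eq_sym in nba; case/(sigma_inj nij nba) => -> ->.
  by case=> /eqP-> /eqP->.
have [->|_] := eqVneq a i; last by rewrite big1.
by rewrite (bigD1 j) 1?eq_sym //= eqxx big1 // => b /andP[_ /negbTE->].
Qed.

Lemma indeg_edge a i j : i != j -> indeg a U_(sigma i j) = (a == j).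
Proof.
move=> nij; rewrite /indeg (eq_bigr (fun b => nat_of_bool ((a == j) && (b == i)))); last first.
  move=> b nba; rewrite mnm1E; congr nat_of_bool; apply/eqP/andP.
    by case/(sigma_inj nij nba) => -> ->.
  by case=> /eqP-> /eqP->.
have [->|_] := eqVneq a j; last by rewrite big1.
by rewrite (bigD1 i) //= eqxx big1 // => b /andP[_ /negbTE->].
Qed.

Lemma edge_varN_edge (p : 'I_N) i j : ~~ edge_var p -> i != j -> U_(sigma i j)%MM p = 0%N.
Proof.
move=> np nij; rewrite mnm1E; case: eqP => // eqp; case/negP: np.
by apply/existsP; exists i; apply/existsP; exists j; rewrite nij eqp eqxx.
Qed.

Lemma same_degrees_refl mf : same_degrees mf mf.
Proof.
by rewrite /same_degrees eqxx /=; apply/and3P; split; apply/forallP => x; rewrite eqxx ?implybT.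
Qed.

Lemma same_degrees_swap mf m i j k l : i != j -> k != l -> i != l -> k != j ->
  same_degrees mf (U_(sigma i j) + U_(sigma k l) + m)%MM =
  same_degrees mf (U_(sigma i l) + U_(sigma k j) + m)%MM.
Proof.
move=> nij nkl nil nkj; rewrite /same_degrees !mdegD !mdeg1.
congr [&& _, _, _ & _]; apply: eq_forallb => x.
- by rewrite !outdegD !outdeg_edge.
- by rewrite !indegD !indeg_edge // [((x == j) + _)%N]addnC.
- have [//|nx] := boolP (edge_var x).
  by rewrite !mnmDE !edge_varN_edge.
Qed.

Lemma same_degrees_2path mf m x y z : ~~ has_2path mf -> x != y -> y != z ->
  ~~ same_degrees mf (U_(sigma x y) + U_(sigma y z) + m)%MM.
Proof.
move=> no2p nxy nyz; apply: contra no2p => /and4P[_ /forallP out /forallP inn _].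
move: (eqP (out y)) (eqP (inn y)).
rewrite !outdegD !indegD (outdeg_edge y nxy) (outdeg_edge y nyz).
rewrite (indeg_edge y nxy) (indeg_edge y nyz) eqxx (eq_sym y) (negbTE nxy) (negbTE nyz).
move=> outy iny.
have /sum_nat_gt0P[c nyc myc] : (0 < outdeg y mf)%N by rewrite -outy.
have /sum_nat_gt0P[b nby mby] : (0 < indeg y mf)%N by rewrite -iny.
by apply: (has_2pathI nby _ mby myc); rewrite eq_sym.
Qed.

Lemma same_degrees_lt_crossing mf m : ~~ has_2path mf ->
  same_degrees mf m -> drl_gt mf m -> has_crossing mf.
Proof.
move=> no2p /and4P[/eqP dm /forallP out /forallP inn /forallP off].
case=> [|[_ [p [mfp mup]]]]; first by rewrite dm ltnn.
have: edge_var p by apply: contraLR mfp => np; rewrite (eqP (implyP (off p) np)) ltnn.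
case/existsP => i /existsP[l /andP[nil /eqP def_p]].
have nli : l != i by rewrite eq_sym.
have mfil : (mf (sigma i l) < m (sigma i l))%N by rewrite def_p.
have [j /andP[nji njl] mfij] := sum_nat_eq_compensate (esym (eqP (out i))) nli mfil.
have [k /andP[nkl nki] mfkl] := sum_nat_eq_compensate (esym (eqP (inn l))) nil mfil.
have nij : i != j by rewrite eq_sym.
have nik : i != k by rewrite eq_sym.
have mfij0 := leq_ltn_trans (leq0n _) mfij; have mfkl0 := leq_ltn_trans (leq0n _) mfkl.
have njk : j != k.
  by apply: contra no2p => /eqP ejk; subst k; apply: has_2pathI mfij0 mfkl0.
have below_p (q : 'I_N) : (m q < mf q)%N -> (q < p)%N.
  move=> mq; rewrite ltn_neqAle; apply/andP; split.
    by apply: contraTneq mq => /val_inj->; rewrite -leqNgt ltnW.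
  by rewrite leqNgt; apply: contraL mq => /mup->; rewrite ltnn.
apply/existsP; exists i; apply/existsP; exists j; apply/existsP; exists k; apply/existsP; exists l.
by rewrite /crossing nij nkl nil nik njl (eq_sym k) njk mfij0 mfkl0 def_p !below_p.
Qed.

End MonomialGraph.

Definition det2 (R : comNzRingType) m (A : 'M[R]_m) i k j l := A i j * A k l - A i l * A k j.

Lemma minors2_det2 (R : comNzRingType) m (A : 'M[R]_m) i k j l : i != k -> j != l ->
  minors2 A (det2 A i k j l) \/ minors2 A (- det2 A i k j l).
Proof.
have swap_rows i' k' j' l' : det2 A k' i' j' l' = - det2 A i' k' j' l'.
  by rewrite /det2 opprB [A k' j' * _]mulrC [A k' l' * _]mulrC.
have swap_cols i' k' j' l' : det2 A i' k' l' j' = - det2 A i' k' j' l'.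
  by rewrite /det2 opprB.
move=> nik njl; have [ik|ki|/val_inj eik] := ltngtP i k; last by rewrite eik eqxx in nik.
all: have [jl|lj|/val_inj ejl] := ltngtP j l; last by rewrite ejl eqxx in njl.
- by left; exists i, k, j, l.
- by right; rewrite -swap_cols; exists i, k, l, j.
- by right; rewrite -swap_rows; exists k, i, j, l.
- by left; rewrite -[det2 _ _ _ _ _]opprK -swap_rows -swap_cols; exists k, i, l, j.
Qed.

Section MinorsOfX.
Variables (n N : nat) (sigma : 'I_n.+1 -> 'I_n.+1 -> 'I_N).
Hypothesis sigma_inj :
  forall i j k l, i != j -> k != l -> sigma i j = sigma k l -> i = k /\ j = l.
Implicit Types (m mf : 'X_{1..N}) (i j k l : 'I_n.+1).

Local Notation X := (Xmat sigma).

Lemma XmatE i j : X i j = if i == j then 0 else 'X_(sigma i j).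
Proof. by rewrite mxE. Qed.

Definition minor_lead_dvd mf :=
  exists2 g, minors2 X g & exists2 mg, is_lead_mon g mg & mon_dvd mg mf.

Lemma minor_lead_dvd_det2 mf mg i k j l : i != k -> j != l ->
  is_lead_mon (det2 X i k j l) mg -> mon_dvd mg mf -> minor_lead_dvd mf.
Proof.
move=> nik njl lead dvd; have [Mg|Mg] := minors2_det2 X nik njl.
  by exists (det2 X i k j l) => //; exists mg.
by exists (- det2 X i k j l) => //; exists mg => //; apply: is_lead_monN.
Qed.

Lemma minor_lead_dvd_2path mf : has_2path sigma mf -> minor_lead_dvd mf.
Proof.
case/existsP=> a /existsP[b /existsP[c /and4P[nba nac mba mac]]].
have nab : a != b by rewrite eq_sym.
apply: (minor_lead_dvd_det2 (mg := (U_(sigma a c) + U_(sigma b a))%MM) nab nac).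
  rewrite /det2 !XmatE eqxx (negbTE nac) (negbTE nba) mul0r sub0r -mpolyXD.
  exact/is_lead_monN/is_lead_monX.
by apply: mon_dvd_mnm2 => //; apply: contra nab => /eqP/sigma_inj[] // ->.
Qed.

Lemma minor_lead_dvd_crossing mf : has_crossing sigma mf -> minor_lead_dvd mf.
Proof.
case/existsP=> i /existsP[j /existsP[k /existsP[l]]].
case/and5P=> nij nkl nil nkj /and5P[nik njl mfij mfkl /andP[ij_il kl_il]].
apply: (minor_lead_dvd_det2 (mg := (U_(sigma i j) + U_(sigma k l))%MM) nik njl).
  rewrite /det2 !XmatE (negbTE nij) (negbTE nkl) (negbTE nil) (negbTE nkj) -!mpolyXD.
  exact/is_lead_mon_binomial/drl_gt_mnm2.
by apply: mon_dvd_mnm2 => //; apply: contra nik => /eqP/sigma_inj[] // ->.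
Qed.

Lemma mcoeff_sum_mulX_path mf h r c r' c' : ~~ has_2path sigma mf ->
  [|| r == c, r' == c', c == r' | r == c'] ->
  mcoeff_sum (same_degrees sigma mf) (h * (X r c * X r' c')) = 0.
Proof.
move=> no2p path; rewrite !XmatE.
have [_|nrc] := eqVneq r c; first by rewrite mul0r mulr0 raddf0.
have [_|nrc'] := eqVneq r' c'; first by rewrite !mulr0 raddf0.
rewrite -mpolyXD mcoeff_sumMX big_pred0 // => m.
move: path; rewrite (negbTE nrc) (negbTE nrc') /= => /orP[/eqP ecr' | /eqP erc'].
  by subst r'; apply/negbTE/(same_degrees_2path sigma_inj).
subst c'; rewrite [(U_(sigma r c) + _)%MM]addmC.
exact/negbTE/(same_degrees_2path sigma_inj).
Qed.

Lemma mcoeff_sum_det2 mf h i k j l : ~~ has_2path sigma mf ->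
  mcoeff_sum (same_degrees sigma mf) (h * det2 X i k j l) = 0.
Proof.
move=> no2p; rewrite mulrBr mcoeff_sumB.
have [/and4P[nij nkl nil nkj]|] := boolP [&& i != j, k != l, i != l & k != j].
  rewrite !XmatE (negbTE nij) (negbTE nkl) (negbTE nil) (negbTE nkj) -!mpolyXD.
  rewrite !mcoeff_sumMX.
  by rewrite (eq_bigl _ _ (fun m => same_degrees_swap sigma_inj mf m nij nkl nil nkj)) subrr.
rewrite !negb_and !negbK => degenerate.
rewrite !mcoeff_sum_mulX_path ?subrr //.
  by move: degenerate; rewrite (eq_sym l k); case/or4P=> ->; rewrite ?orbT.
by move: degenerate; rewrite (eq_sym j k); case/or4P=> ->; rewrite ?orbT.
Qed.

Lemma mcoeff_sum_in_ideal mf f : ~~ has_2path sigma mf ->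
  in_ideal (minors2 X) f -> mcoeff_sum (same_degrees sigma mf) f = 0.
Proof.
move=> no2p [s [sM ->]]; rewrite raddf_sum big1_seq // => -[h g] /andP[_ /sM].
by case=> i [k [j [l [_ _ ->]]]]; apply: mcoeff_sum_det2.
Qed.

Lemma lead_mon_ideal_minor_dvd f mf :
  in_ideal (minors2 X) f -> is_lead_mon f mf -> minor_lead_dvd mf.
Proof.
move=> If [fmf mf_max].
have [/minor_lead_dvd_2path //|no2p] := boolP (has_2path sigma mf).
have [/minor_lead_dvd_crossing //|nocross] := boolP (has_crossing sigma mf).
have: mcoeff_sum (same_degrees sigma mf) f = f@_mf.
  apply: mcoeff_sum_single (same_degrees_refl _ _) _ => // m fm mf_m.
  apply/eqP; apply: contraNT nocross => nm.
  exact: same_degrees_lt_crossing no2p mf_m (mf_max m fm nm).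
by rewrite mcoeff_sum_in_ideal // => f_mf0; move: fmf; rewrite mcoeff_msupp -f_mf0 eqxx.
Qed.

End MinorsOfX.

Theorem corollary6p1 (n : nat) (hn : (1 <= n)%N)
  (sigma : 'I_n.+1 -> 'I_n.+1 -> 'I_(n.+1 * n))
  (hsig : forall i j k l, i != j -> k != l -> sigma i j = sigma k l -> i = k /\ j = l) :
  groebner_drl (minors2 (Xmat sigma)).
Proof.
move=> f If fnz; have [mf lead_f] := exists_lead_mon fnz.
have [g Mg [mg lead_g dvd]] := lead_mon_ideal_minor_dvd hsig If lead_f.
exists g; split=> //; first exact: is_lead_mon_neq0 lead_g.
by exists mf, mg.
Qed.
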